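(* Let $m$ be even, $1\le r\le m$, and let $f\colon\mathbb{F}_2^m=\mathbb{F}_2^{m-r}\times\mathbb{F}_2^r\to\mathbb{F}_2$ be a bent function. For $\lambda\in\mathbb{F}_2^r$ define $f_\lambda\colon\mathbb{F}_2^{m-r}\to\mathbb{F}_2$ by $f_\lambda(t)=f(t,\lambda)$. Then every Walsh coefficient of $f_\lambda$ lies in the set $W_r=\{2^{m/2}-i\cdot 2^{m/2-r+1} : 0\le i\le 2^r\}$.
   Context: The Walsh coefficient of a Boolean function $g\colon\mathbb{F}_2^n\to\mathbb{F}_2$ at $a\in\mathbb{F}_2^n$ is $\widehat g(a)=\sum_{x\in\mathbb{F}_2^n}(-1)^{g(x)+a\cdot x}$, where $a\cdot x$ is the standard inner product. For $m$ even, $f\colon\mathbb{F}_2^m\to\mathbb{F}_2$ is bent if $\widehat f(a)\in\{\pm 2^{m/2}\}$ for all $a\in\mathbb{F}_2^m$ (equivalently, for all nonzero $a$ and all $b$, $f(x+a)+f(x)=b$ has $2^{m-1}$ solutions). *)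

From mathcomp Require Import all_boot all_order all_algebra.
Set Implicit Arguments. Unset Strict Implicit. Unset Printing Implicit Defensive.
Import GRing.Theory Num.Theory.
Local Open Scope ring_scope.

Definition dotF2 (n : nat) (a x : 'rV['F_2]_n) : 'F_2 := \sum_(i < n) a 0 i * x 0 i.

Definition sgnF2 (b : 'F_2) : int := (-1) ^+ (nat_of_ord b).

Definition walsh (n : nat) (g : 'rV['F_2]_n -> 'F_2) (a : 'rV['F_2]_n) : int :=
  \sum_(x : 'rV['F_2]_n) sgnF2 (g x + dotF2 a x).

Definition bent (m : nat) (f : 'rV['F_2]_m -> 'F_2) : Prop :=
  ~~ odd m /\
  forall a : 'rV['F_2]_m,
    walsh f a = (2 ^ (m %/ 2))%:Z \/ walsh f a = - (2 ^ (m %/ 2))%:Z.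

(* W_r = { 2^(m/2) - i * 2^(m/2 - r + 1) : 0 <= i <= 2^r }, stated as a predicate
   on integers; 2^(m/2 - r + 1) is taken as a rational (it may be fractional). *)
Definition in_W (m r : nat) (w : int) : Prop :=
  exists i : nat, (i <= 2 ^ r)%N /\
    (w%:~R : rat) = (2 ^ (m %/ 2))%:R - i%:R * (2%:R ^ (m %/ 2)%N / 2%:R ^ r * 2%:R).

(** Restricting the second block of variables to [lambda] is, up to the factor
    [2^r], the Fourier inversion along those variables: by orthogonality of the
    characters of [F_2^r],
    [2^r * W_{f_lambda}(a) = \sum_mu (-1)^(mu . lambda) * W_f(a, mu)].
    Since [f] is bent each of the [2^r] summands is [+-2^(m/2)]; if [k] of them
    are negative the sum is [2^(m/2) * (2^r - 2k)], and dividing by [2^r] puts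
    [W_{f_lambda}(a)] in [W_r]. *)
From mathcomp Require Import all_boot all_order all_algebra ring.
Set Implicit Arguments. Unset Strict Implicit. Unset Printing Implicit Defensive.
Import GRing.Theory Num.Theory.
Local Open Scope ring_scope.

Lemma sgnF2_pm (b : 'F_2) : sgnF2 b = 1 \/ sgnF2 b = -1.
Proof. by case: b => [[|[|]]]; [left | right |]. Qed.

Lemma sgnF2D (a b : 'F_2) : sgnF2 (a + b) = sgnF2 a * sgnF2 b.
Proof. by case: a => [[|[|]]] // ?; case: b => [[|[|]]]. Qed.

Lemma sgnF2B (a b : 'F_2) : sgnF2 (a - b) = sgnF2 a * sgnF2 b.
Proof. by case: a => [[|[|]]] // ?; case: b => [[|[|]]]. Qed.

Lemma sgnF2_neq0 (b : 'F_2) : b != 0 -> sgnF2 b = -1.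
Proof. by case: b => [[|[|]]]. Qed.

Lemma dotF2Dl n (x y c : 'rV['F_2]_n) : dotF2 (x + y) c = dotF2 x c + dotF2 y c.
Proof. by rewrite /dotF2 -big_split; apply: eq_bigr => j _; rewrite mxE mulrDl. Qed.

Lemma dotF2Br n (mu x y : 'rV['F_2]_n) : dotF2 mu (x - y) = dotF2 mu x - dotF2 mu y.
Proof. by rewrite /dotF2 -sumrB; apply: eq_bigr => j _; rewrite !mxE mulrBr. Qed.

Lemma dotF2r0 n (mu : 'rV['F_2]_n) : dotF2 mu 0 = 0.
Proof. by rewrite /dotF2 big1 // => j _; rewrite mxE mulr0. Qed.

Lemma dotF2_delta n (i : 'I_n) (c : 'rV['F_2]_n) : dotF2 (delta_mx 0 i) c = c 0 i.
Proof.
rewrite /dotF2 (bigD1 i) //= big1 ?addr0 ?mxE ?eqxx ?mul1r // => j /negbTE ji.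
by rewrite mxE ji andbF mul0r.
Qed.

Lemma dotF2_row_mx n r (a t : 'rV['F_2]_n) (mu l : 'rV['F_2]_r) :
  dotF2 (row_mx a mu) (row_mx t l) = dotF2 a t + dotF2 mu l.
Proof.
rewrite /dotF2 big_split_ord /=.
by congr (_ + _); apply: eq_bigr => j _; rewrite ?row_mxEl ?row_mxEr.
Qed.

Lemma card_rV_F2 r : #|{: 'rV['F_2]_r}| = (2 ^ r)%N.
Proof. by rewrite card_mx card_Fp // mul1n. Qed.

Lemma sum_row_mx (K : finType) (V : nmodType) n r (F : 'rV[K]_(n + r) -> V) :
  \sum_x F x = \sum_(t : 'rV[K]_n) \sum_(l : 'rV[K]_r) F (row_mx t l).
Proof.
rewrite pair_big /= (reindex (fun p : 'rV[K]_n * 'rV[K]_r => row_mx p.1 p.2)) //=.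
exists (fun x => (lsubmx x, rsubmx x)) => [[t l] _ | x _] /=.
  by rewrite row_mxKl row_mxKr.
by rewrite hsubmxK.
Qed.

Lemma sumr_pm (T : finType) (V : zmodType) (c : V) (e : T -> V) :
  (forall x, e x = c \/ e x = - c) ->
  \sum_x e x = c *+ #|T| - c *+ (2 * #|[set x | e x != c]|).
Proof.
move=> e_pm; have -> : #|[set x | e x != c]| = (\sum_x (e x != c))%N.
  by rewrite -sum1_card big_mkcond; apply: eq_bigr => x _; rewrite inE; case: (_ != _).
rewrite -sumr_const big_distrr -sumrMnr -sumrB.
apply: eq_bigr => x _; case: (e_pm x) => ->; first by rewrite eqxx subr0.
case: eqP => [-> | _]; first by rewrite subr0.
by rewrite mulr2n opprD addNKr.
Qed.

Lemma sum_sgnF2_dot r (c : 'rV['F_2]_r) :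
  \sum_mu sgnF2 (dotF2 mu c) = if c == 0 then (2 ^ r)%:Z else 0.
Proof.
have [-> | c_neq0] := eqVneq c 0.
  by under eq_bigr do rewrite dotF2r0; rewrite sumr_const card_rV_F2 natz.
have [i ci_neq0] : exists i, c 0 i != 0.
  apply/existsP; apply: contraNT c_neq0 => /existsPn c0.
  by apply/eqP/rowP => i; rewrite mxE; apply/eqP/negbNE.
set S := \sum_mu _.
have S_opp : S = - S.
  (* translating [mu] by the [i]-th unit vector flips every sign *)
  rewrite /S [LHS](reindex_inj (addIr (delta_mx 0 i))) /= -sumrN.
  apply: eq_bigr => mu _.
  by rewrite dotF2Dl sgnF2D dotF2_delta (sgnF2_neq0 ci_neq0) mulrN1.
by apply/eqP; move/eqP: S_opp; rewrite -addr_eq0 -mulr2n mulrn_eq0.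
Qed.

Lemma sum_sgnF2_dot_mul r (l1 l2 : 'rV['F_2]_r) :
  \sum_mu sgnF2 (dotF2 mu l1) * sgnF2 (dotF2 mu l2)
    = if l1 == l2 then (2 ^ r)%:Z else 0.
Proof.
under eq_bigr do rewrite -sgnF2B -dotF2Br.
by rewrite sum_sgnF2_dot subr_eq0.
Qed.

Lemma walsh_row_mx n r (f : 'rV['F_2]_(n + r) -> 'F_2) a mu :
  walsh f (row_mx a mu) =
  \sum_t \sum_l sgnF2 (f (row_mx t l) + dotF2 a t) * sgnF2 (dotF2 mu l).
Proof.
rewrite /walsh sum_row_mx; apply: eq_bigr => t _; apply: eq_bigr => l _.
by rewrite dotF2_row_mx addrA [LHS]sgnF2D.
Qed.

Lemma walsh_restriction_inversion n r (f : 'rV['F_2]_(n + r) -> 'F_2) lambda a :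
  \sum_mu sgnF2 (dotF2 mu lambda) * walsh f (row_mx a mu)
    = (2 ^ r)%:Z * walsh (fun t => f (row_mx t lambda)) a.
Proof.
set g := fun t l => sgnF2 (f (row_mx t l) + dotF2 a t).
transitivity (\sum_t \sum_l g t l *
                \sum_mu sgnF2 (dotF2 mu lambda) * sgnF2 (dotF2 mu l)).
  under eq_bigr do rewrite walsh_row_mx big_distrr.
  rewrite exchange_big; apply: eq_bigr => t _ /=.
  under eq_bigr do rewrite big_distrr.
  rewrite exchange_big; apply: eq_bigr => l _ /=.
  by rewrite big_distrr; apply: eq_bigr => mu _; rewrite /= mulrCA mulrA.
rewrite /walsh big_distrr; apply: eq_bigr => t _.
under eq_bigr do rewrite sum_sgnF2_dot_mul.
rewrite (bigD1 lambda) //= eqxx big1 => [|l]; first by rewrite addr0 mulrC.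
by rewrite eq_sym => /negbTE ->; rewrite mulr0.
Qed.

Lemma in_W_scaled (m r k : nat) (w : int) : (k <= 2 ^ r)%N ->
  (2 ^ r)%:Z * w = (2 ^ (m %/ 2))%:Z *+ 2 ^ r - (2 ^ (m %/ 2))%:Z *+ (2 * k) ->
  in_W m r w.
Proof.
move=> k_le scaled; exists k; split => //.
have int_natr (j : nat) : (j%:Z)%:~R = j%:R :> rat by [].
have /(congr1 (fun z : int => z%:~R : rat)) := scaled.
rewrite intrM intrB !rmorphMn /= !int_natr !natrX -!exprnP => scaled_rat.
have pow_neq0 : 2%:R ^+ r != 0 :> rat by rewrite expf_eq0 pnatr_eq0 andbF.
apply: (mulfI pow_neq0); rewrite scaled_rat.
rewrite -(mulr_natr _ (2 ^ r)) -(mulr_natr _ (2 * k)) natrM natrX.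
by field.
Qed.

Theorem mainTheorem7 (n r : nat) (f : 'rV['F_2]_(n + r) -> 'F_2) :
  ~~ odd (n + r) -> (1 <= r)%N -> bent f ->
  forall (lambda : 'rV['F_2]_r) (a : 'rV['F_2]_n),
    in_W (n + r) r (walsh (fun t : 'rV['F_2]_n => f (row_mx t lambda)) a).
Proof.
move=> _ _ [_ f_bent] lambda a.
set c := (2 ^ ((n + r) %/ 2))%:Z.
pose e mu := sgnF2 (dotF2 mu lambda) * walsh f (row_mx a mu).
have e_pm mu : e mu = c \/ e mu = - c.
  rewrite /e; case: (sgnF2_pm (dotF2 mu lambda)) => ->;
  by case: (f_bent (row_mx a mu)) => ->; rewrite ?mul1r ?mulN1r ?opprK; auto.
apply: (@in_W_scaled _ _ #|[set mu | e mu != c]|).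
  by rewrite -card_rV_F2 max_card.
by rewrite -walsh_restriction_inversion (sumr_pm e_pm) card_rV_F2.
Qed.
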